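(* Let $\lambda\in\mathbb Q\cup\{\infty\}$, $i\in\{2,3,6\}$ and $\ell\in\mathbb Z_{>0}$ not divisible by $i$. Write $\lambda=b/a$ with $a\in\mathbb N$, $b\in\mathbb Z$, $\gcd(a,b)=\ell$ (for $\lambda=\infty$ take $a=0$, $b=\ell$), and write $a=ia'+a''$, $b=ib'+b''$ with $a',a'',b',b''\in\mathbb Z$, $0\le a'',b''\le i-1$. Then $$R^\lambda_\ell(i)=\{a'h_0+b'h_\infty+r\mid r\in R_{[a'',b'']}(i)\}.$$
   Context: Let $V=\{1_1,1_2,2_1,2_2,3_0,3_1,4_0,4_1,5_{-1},5_0\}$ and identify $\mathbb Z^{10}=\mathbb Z^V$. Let $A$ be the set of 12 arrows $2_2\to1_2$, $1_2\to2_1$, $3_1\to2_1$, $2_2\to3_1$, $4_1\to3_1$, $3_1\to4_0$, $5_0\to4_0$, $4_1\to5_0$, $2_1\to1_1$, $2_1\to3_0$, $4_0\to3_0$, $4_0\to5_{-1}$, and let $P=\{(2_2,2_1),(4_1,4_0),(1_2,1_1),(3_1,3_0),(5_0,5_{-1})\}$. The Ringel form is $\langle d,e\rangle=\sum_{v\in V}d_ve_v-\sum_{(v\to w)\in A}d_ve_w+\sum_{(v,w)\in P}d_ve_w$. Write $\langle d,e\rangle=d^{t}Ee$ and $\Phi=-E^{-1}E^{t}$ (integral, $\Phi^6=\mathrm{id}$). Let $q(d)=\langle d,d\rangle$, $R=\{d\neq0: q(d)\in\{0,1\}\}$. Let $h_0$ have entries $(1,1,3,0,2,2,3,0,1,1)$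 and $h_\infty$ entries $(0,1,1,1,0,2,1,1,0,1)$ at the vertices $(1_1,1_2,2_1,2_2,3_0,3_1,4_0,4_1,5_{-1},5_0)$. $R^+=\{d\in R: \langle d,h_\infty\rangle>0\text{ or }(\langle d,h_\infty\rangle=0\text{ and }\langle h_0,d\rangle>0)\}$; the slope of $d\in R^+$ is $\langle h_0,d\rangle/\langle d,h_\infty\rangle\in\mathbb Q\cup\{\infty\}$, $R^\lambda$ the positive roots of slope $\lambda$. $\operatorname{rk}(d)$ is the least $m\ge1$ with $\Phi^m(d)=d$, $h(d)=\sum_{j=1}^{\operatorname{rk}(d)}\Phi^j(d)$, $\operatorname{ql}(d)$ the gcd of the entries of $h(d)$, and $R^\lambda_\ell(i)=\{d\in R^\lambda:\operatorname{rk}(d)=i,\operatorname{ql}(d)=\ell\}$. For $0\le m,n\le i-1$, $(m,n)\ne(0,0)$, set $R_{[m,n]}(i)=R^{n/m}_{\gcd(m,n)}(i)$ (with $n/0=\infty$). *)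

From HB Require Import structures.
From mathcomp Require Import all_boot all_order all_algebra.
Set Implicit Arguments. Unset Strict Implicit. Unset Printing Implicit Defensive.
Import Order.TTheory GRing.Theory Num.Theory.
Local Open Scope ring_scope.

(* Vertices are numbered 0..9 in the order
   1_1, 1_2, 2_1, 2_2, 3_0, 3_1, 4_0, 4_1, 5_{-1}, 5_0.
   Dimension vectors d in Z^V are integer column vectors of height 10. *)
Definition vec := 'cV[int]_10.

Definition at_v (d : vec) (v : nat) : int := d (inord v) 0.

Definition arrows : seq (nat * nat) :=
  [:: (3,1); (1,2); (5,2); (3,5); (7,5); (5,6); (9,6); (7,9);
      (2,0); (2,4); (6,4); (6,8)]%N.

Definition Ppairs : seq (nat * nat) :=
  [:: (3,2); (7,6); (1,0); (5,4); (9,8)]%N.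

Definition ringel (d e : vec) : int :=
  \sum_(v < 10) d v 0 * e v 0
  - \sum_(p <- arrows) at_v d p.1 * at_v e p.2
  + \sum_(p <- Ppairs) at_v d p.1 * at_v e p.2.

Definition Emx : 'M[int]_10 :=
  \matrix_(i < 10, j < 10) ringel (delta_mx i 0) (delta_mx j 0).

Definition Phi : 'M[int]_10 := - (invmx Emx *m Emx^T).

Definition qform (d : vec) : int := ringel d d.

Definition vec_of (s : seq int) : vec := \col_(i < 10) nth 0 s i.

Definition h0 : vec := vec_of [:: 1; 1; 3; 0; 2; 2; 3; 0; 1; 1].
Definition hinf : vec := vec_of [:: 0; 1; 1; 1; 0; 2; 1; 1; 0; 1].

Definition isRoot (d : vec) : bool :=
  (d != 0) && ((qform d == 0) || (qform d == 1)).

Definition isPos (d : vec) : bool :=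
  (0 < ringel d hinf) || ((ringel d hinf == 0) && (0 < ringel h0 d)).

(* slope in Q u {oo}; None stands for oo *)
Definition slope (d : vec) : option rat :=
  if ringel d hinf == 0 then None
  else Some ((ringel h0 d)%:~R / (ringel d hinf)%:~R).

Definition Rlam (lam : option rat) (d : vec) : bool :=
  [&& isRoot d, isPos d & slope d == lam].

Definition hasRank (d : vec) (i : nat) : bool :=
  [&& (0 < i)%N, (Phi ^+ i *m d == d) &
      [forall m : 'I_i, (0 < m)%N ==> (Phi ^+ m *m d != d)]].

Definition hvec (d : vec) (i : nat) : vec :=
  \sum_(1 <= j < i.+1) (Phi ^+ j *m d).

Definition ql (d : vec) (i : nat) : nat :=
  \big[gcdn/0%N]_(j < 10) `|hvec d i j ord0|%N.

Definition Rli (lam : option rat) (l i : nat) (d : vec) : bool :=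
  [&& Rlam lam d, hasRank d i & ql d i == l].

Definition Rmn (m n i : nat) (d : vec) : bool :=
  Rli (if m == 0%N then None else Some (n%:Q / m%:Q)) (gcdn m n) i d.

(* The Coxeter transformation Phi = -E^-1 E^T preserves the Ringel form, and its
   fixed vectors are exactly the radical of the symmetrised form, which is spanned
   by h0 and hinf.  For d of Phi-rank i the vector h(d) is Phi-fixed, so
   h(d) = s h0 + t hinf, and pairing with hinf and h0 gives 6 s = i <d, hinf> and
   6 t = i <h0, d>.  Thus positivity and slope of d are those of (s, t) and
   ql(d) = gcd(s, t): d lies in R^lambda_l(i) iff h(d) = a h0 + b hinf.  Adding
   s h0 + t hinf to d changes neither q(d) nor its rank and shifts h(d) by
   i (s h0 + t hinf), which yields the bijection r |-> a' h0 + b' hinf + r. *)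

From HB Require Import structures.
From mathcomp Require Import all_boot all_order all_algebra.
From mathcomp Require Import zify ring.
Set Implicit Arguments. Unset Strict Implicit. Unset Printing Implicit Defensive.
Import Order.TTheory GRing.Theory Num.Theory.
Local Open Scope ring_scope.

(* [isPos d] and [slope d] are [pos_pair] and [slope_pair] of (<d, hinf>, <h0, d>). *)
Definition pos_pair (y x : int) : bool := (0 < y) || ((y == 0) && (0 < x)).

Definition slope_pair (y x : int) : option rat :=
  if y == 0 then None else Some (x%:~R / y%:~R).

Definition slope_repr (lam : option rat) (l a : nat) (b : int) : Prop :=
  match lam with
  | None => a = 0%N /\ b = l%:Z
  | Some x => (0 < a)%N /\ x = b%:~R / a%:R
  end.

Section PositiveScaling.

Variables (c c' y x y' x' : int).
Hypotheses (c_gt0 : 0 < c) (c'_gt0 : 0 < c').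
Hypotheses (eq_y : c * y = c' * y') (eq_x : c * x = c' * x').

Lemma pos_pair_scale : pos_pair y x = pos_pair y' x'.
Proof.
rewrite /pos_pair; have -> : (0 < y) = (0 < y') by apply/idP/idP => ?; nia.
have -> : (y == 0) = (y' == 0) by apply/eqP/eqP => ?; nia.
by have -> : (0 < x) = (0 < x') by apply/idP/idP => ?; nia.
Qed.

Lemma slope_pair_scale : slope_pair y x = slope_pair y' x'.
Proof.
rewrite /slope_pair; have -> : (y == 0) = (y' == 0) by apply/eqP/eqP => ?; nia.
have [//|y'0] := eqVneq y' 0; congr Some.
have y0 : y != 0 by apply: contraNneq y'0 => y0; nia.
apply/eqP; rewrite eqr_div ?intr_eq0 // -!intrM eqr_int; apply/eqP.
apply: (mulfI (lt0r_neq0 (mulr_gt0 c_gt0 c'_gt0))).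
by transitivity ((c * x) * (c' * y')); [ring | rewrite eq_x -eq_y; ring].
Qed.

End PositiveScaling.

Lemma gcd_proportional_eq (y a : nat) (x b : int) :
  (0 < a)%N -> y%:Z * b = x * a%:Z -> gcdn y `|x| = gcdn a `|b| -> y = a /\ x = b.
Proof.
move=> a_gt0 ey eg; have l_gt0 : (0 < gcdn a `|b|)%N by rewrite gcdn_gt0 a_gt0.
have exy : (y * `|b| = `|x| * a)%N by move/(congr1 absz): ey; rewrite !abszM.
have ya : (y * gcdn a `|b| = a * gcdn a `|b|)%N.
  by rewrite -{2}eg !muln_gcdr exy mulnC [(`|x| * a)%N]mulnC.
have {}ya : y = a by apply/eqP; rewrite -(eqn_pmul2r l_gt0) ya.
by split=> //; subst y; apply: (mulIf (x := a%:Z)); [lia | rewrite -ey mulrC].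
Qed.

Lemma pos_slope_gcdE (y x : int) lam (l a : nat) (b : int) :
  (0 < l)%N -> gcdn a `|b| = l -> slope_repr lam l a b ->
  [&& pos_pair y x, slope_pair y x == lam & gcdn `|y| `|x| == l] =
  (y == a) && (x == b).
Proof.
rewrite /pos_pair /slope_pair => l_gt0 gab; case: lam => [q [a_gt0 ->]|[a0 bl]].
  have [y0|y0] := eqVneq y 0; first by rewrite andbF; apply/esym/negbTE; lia.
  apply/idP/idP => [/and3P[y_gt0 /eqP[exy] /eqP gyx] | /andP[/eqP-> /eqP->]].
    rewrite /= orbF in y_gt0.
    have {}exy : `|y|%:Z * b = x * a%:Z.
      move/eqP: exy; rewrite gtz0_abs // eqr_div ?intr_eq0 ?pnatr_eq0 -?lt0n //.
      by rewrite -[a%:R]/(a%:Z%:~R) -!intrM eqr_int => /eqP ->; rewrite mulrC.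
    have [ya <-] := gcd_proportional_eq a_gt0 exy (etrans gyx (esym gab)).
    by rewrite -ya gtz0_abs // !eqxx.
  by rewrite /= orbF gab eqxx andbT ltz_nat a_gt0; apply/eqP.
rewrite a0 bl; have [->|y0] := eqVneq y 0; last by rewrite andbF.
by rewrite /= gcd0n; apply/idP/idP; lia.
Qed.

Section GramMatrix.

Variables (R : comPzRingType) (n : nat) (f : 'cV[R]_n -> 'cV[R]_n -> R).
Hypothesis f_linl : forall e a x y, f (a *: x + y) e = a * f x e + f y e.
Hypothesis f_linr : forall d a x y, f d (a *: x + y) = a * f d x + f d y.

Let f_additive_l e : {morph f^~ e : x y / x + y} * (f 0 e = 0).
Proof.
have fD x y : f (x + y) e = f x e + f y e by rewrite -{1}[x]scale1r f_linl mul1r.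
by split=> //; apply: (addrI (f 0 e)); rewrite -fD !addr0.
Qed.

Let f_additive_r d : {morph f d : x y / x + y} * (f d 0 = 0).
Proof.
have fD x y : f d (x + y) = f d x + f d y by rewrite -{1}[x]scale1r f_linr mul1r.
by split=> //; apply: (addrI (f d 0)); rewrite -fD !addr0.
Qed.

Let col_sum_delta (x : 'cV[R]_n) : x = \sum_i x i 0 *: delta_mx i 0.
Proof. by rewrite {1}[x]matrix_sum_delta; apply: eq_bigr => i _; rewrite big_ord1. Qed.

Lemma bilinear_gramE d e :
  f d e = (d^T *m (\matrix_(i, j) f (delta_mx i 0) (delta_mx j 0)) *m e) 0 0.
Proof.
have fZl a x : f (a *: x) e = a * f x e.
  by rewrite -[_ *: _]addr0 f_linl (f_additive_l e).2 addr0.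
have fr x : f x e = \sum_j e j 0 * f x (delta_mx j 0).
  have [fDr f0r] := f_additive_r x; rewrite {1}[e]col_sum_delta (big_morph _ fDr f0r).
  by apply: eq_bigr => j _; rewrite -[_ *: _]addr0 f_linr f0r addr0.
have [fDl f0l] := f_additive_l e; rewrite {1}[d]col_sum_delta (big_morph _ fDl f0l).
rewrite mxE; under eq_bigr do rewrite fZl fr big_distrr.
rewrite exchange_big; apply: eq_bigr => j _; rewrite !mxE big_distrl.
by apply: eq_bigr => i _; rewrite !mxE /= [e j 0 * _]mulrC mulrA.
Qed.

End GramMatrix.

Section CoxeterTransformation.

Variables (R : comUnitRingType) (n : nat) (E : 'M[R]_n).
Hypothesis E_unit : E \in unitmx.

Let form (x y : 'cV[R]_n) : R := (x^T *m E *m y) 0 0.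
Let C : 'M[R]_n := - (invmx E *m E^T).

Lemma form_coxeter x y : form y (C *m x) = - form x y.
Proof.
have EC : E *m C = - E^T by rewrite /C mulmxN mulmxA mulmxV // mul1mx.
rewrite /form -mulmxA (mulmxA E) EC mulNmx mulmxN mxE mulmxA.
suff -> : y^T *m E^T *m x = (x^T *m E *m y)^T by rewrite mxE.
by rewrite !trmx_mul !trmxK mulmxA.
Qed.

Lemma coxeter_fixedP h : reflect (forall x, form x h = - form h x) (C *m h == h).
Proof.
apply: (iffP eqP) => [Ch x | skew]; first by rewrite -{1}Ch form_coxeter.
have EC : E *m h = - E^T *m h.
  apply/colP => k; have := skew (delta_mx k 0).
  rewrite /form trmx_delta -mulmxA -rowE -colE mulNmx !mxE => ->.
  by congr (- _); apply: eq_bigr => j _; rewrite !mxE mulrC.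
by rewrite /C !mulNmx -mulmxA -mulmxN -mulNmx -EC mulmxA mulVmx ?mul1mx.
Qed.

Variable h : 'cV[R]_n.
Hypothesis Ch : C *m h = h.

Let skew x : form x h = - form h x.
Proof. by move: x; apply/coxeter_fixedP/eqP. Qed.

Lemma form_coxeterX_l m x : form (C ^+ m *m x) h = form x h.
Proof.
elim: m => [|m IHm]; first by rewrite expr0 mul1mx.
by rewrite exprS -mulmxE -mulmxA skew form_coxeter opprK IHm.
Qed.

Lemma form_coxeterX_r m x : form h (C ^+ m *m x) = form h x.
Proof.
elim: m => [|m IHm]; first by rewrite expr0 mul1mx.
by rewrite exprS -mulmxE -mulmxA form_coxeter skew opprK IHm.
Qed.

End CoxeterTransformation.

Section FixedVectors.

Variables (R : pzRingType) (n : nat) (M : 'M[R]_n).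

Lemma mulmxX_fixed (h : 'cV[R]_n) m : M *m h = h -> M ^+ m *m h = h.
Proof.
move=> Mh; elim: m => [|m IHm]; first by rewrite expr0 mul1mx.
by rewrite exprS -mulmxE -mulmxA IHm.
Qed.

Lemma mulmxX_addfixed (h v : 'cV[R]_n) m :
  M *m h = h -> M ^+ m *m (v + h) = M ^+ m *m v + h.
Proof. by move=> Mh; rewrite mulmxDr (mulmxX_fixed _ Mh). Qed.

Lemma mulmx_orbit_sum (v : 'cV[R]_n) i : M ^+ i *m v = v ->
  M *m (\sum_(1 <= j < i.+1) M ^+ j *m v) = \sum_(1 <= j < i.+1) M ^+ j *m v.
Proof.
case: i => [|i] Miv; first by rewrite big_geq // mulmx0.
rewrite mulmx_sumr (eq_bigr (fun j => M ^+ j.+1 *m v)) => [|j _]; last first.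
  by rewrite mulmxA mulmxE -exprS.
by rewrite big_nat_recr //= [in RHS]big_nat_recl //= exprS -mulmxE -mulmxA Miv addrC.
Qed.

End FixedVectors.

Lemma big_ord10 (F : nat -> int) : \sum_(v < 10) F v =
  F 0%N + F 1%N + F 2%N + F 3%N + F 4%N + F 5%N + F 6%N + F 7%N + F 8%N + F 9%N.
Proof. by rewrite -(big_mkord xpredT F) /index_iota /= !big_cons big_nil !addrA addr0. Qed.

Lemma ord10_ind (P : nat -> Prop) :
  P 0%N -> P 1%N -> P 2%N -> P 3%N -> P 4%N -> P 5%N -> P 6%N -> P 7%N -> P 8%N -> P 9%N ->
  forall k, (k < 10)%N -> P k.
Proof. by move=> ? ? ? ? ? ? ? ? ? ? [|[|[|[|[|[|[|[|[|[|]]]]]]]]]]. Qed.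

Lemma vecP (x y : vec) : (forall k, (k < 10)%N -> at_v x k = at_v y k) -> x = y.
Proof.
move=> xy; apply/colP => k; have := xy k (ltn_ord k).
by rewrite /at_v inord_val.
Qed.

Lemma at_vD x y k : at_v (x + y) k = at_v x k + at_v y k.
Proof. by rewrite /at_v mxE. Qed.

Lemma at_vZ c x k : at_v (c *: x) k = c * at_v x k.
Proof. by rewrite /at_v mxE. Qed.

Lemma at_vec_of s k : (k < 10)%N -> at_v (vec_of s) k = nth 0 s k.
Proof. by move=> lt_k10; rewrite /at_v mxE inordK. Qed.

Lemma at_delta k j : (k < 10)%N -> (j < 10)%N -> at_v (delta_mx (inord k) 0) j = (j == k)%:R.
Proof.
move=> lt_k10 lt_j10; rewrite /at_v mxE eqxx andbT.
by rewrite -(inj_eq val_inj) /= !inordK.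
Qed.

Lemma ringelE d e : ringel d e =
    at_v d 0 * at_v e 0 + at_v d 1 * at_v e 1 + at_v d 2 * at_v e 2
  + at_v d 3 * at_v e 3 + at_v d 4 * at_v e 4 + at_v d 5 * at_v e 5
  + at_v d 6 * at_v e 6 + at_v d 7 * at_v e 7 + at_v d 8 * at_v e 8
  + at_v d 9 * at_v e 9
  - at_v d 3 * at_v e 1 - at_v d 1 * at_v e 2 - at_v d 5 * at_v e 2
  - at_v d 3 * at_v e 5 - at_v d 7 * at_v e 5 - at_v d 5 * at_v e 6
  - at_v d 9 * at_v e 6 - at_v d 7 * at_v e 9 - at_v d 2 * at_v e 0
  - at_v d 2 * at_v e 4 - at_v d 6 * at_v e 4 - at_v d 6 * at_v e 8
  + at_v d 3 * at_v e 2 + at_v d 7 * at_v e 6 + at_v d 1 * at_v e 0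
  + at_v d 5 * at_v e 4 + at_v d 9 * at_v e 8.
Proof.
rewrite /ringel /arrows /Ppairs !big_cons !big_nil /=.
rewrite (eq_bigr (fun k : 'I_10 => at_v d k * at_v e k)) => [|k _]; last first.
  by rewrite /at_v inord_val.
by rewrite (big_ord10 (fun k => at_v d k * at_v e k)); ring.
Qed.

Ltac expand_coords :=
  rewrite ?ringelE ?at_vD ?at_vZ ?at_vec_of //=.

Lemma ringel_linl e a x y : ringel (a *: x + y) e = a * ringel x e + ringel y e.
Proof. expand_coords; ring. Qed.

Lemma ringel_linr d a x y : ringel d (a *: x + y) = a * ringel d x + ringel d y.
Proof. expand_coords; ring. Qed.

Lemma ringelDl e : {morph ringel^~ e : x y / x + y}.
Proof. by move=> x y; rewrite -{1}[x]scale1r ringel_linl mul1r. Qed.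

Lemma ringelDr d : {morph ringel d : x y / x + y}.
Proof. by move=> x y; rewrite -{1}[x]scale1r ringel_linr mul1r. Qed.

Lemma ringel0l e : ringel 0 e = 0.
Proof. by apply: (addrI (ringel 0 e)); rewrite -ringelDl !addr0. Qed.

Lemma ringel0r d : ringel d 0 = 0.
Proof. by apply: (addrI (ringel d 0)); rewrite -ringelDr !addr0. Qed.

Lemma ringel_gramE d e : ringel d e = (d^T *m Emx *m e) 0 0.
Proof. exact: bilinear_gramE ringel_linl ringel_linr d e. Qed.

Definition mx_of_rows (L : seq (seq int)) : 'M[int]_10 :=
  \matrix_(i < 10, j < 10) nth 0 (nth [::] L i) j.

Lemma mx10P (A B : 'M[int]_10) :
  (forall r c, (r < 10)%N -> (c < 10)%N -> A (inord r) (inord c) = B (inord r) (inord c)) ->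
  A = B.
Proof.
move=> AB; apply/matrixP => i j; have := AB i j (ltn_ord i) (ltn_ord j).
by rewrite !inord_val.
Qed.

Lemma mul_mx_of_rows A B r c : (r < 10)%N -> (c < 10)%N ->
  (mx_of_rows A *m mx_of_rows B) (inord r) (inord c) =
  \sum_(k < 10) nth 0 (nth [::] A r) k * nth 0 (nth [::] B k) c.
Proof. by move=> lt_r lt_c; rewrite mxE; apply: eq_bigr => k _; rewrite !mxE !inordK. Qed.

Definition E_rows : seq (seq int) :=
  [:: [:: 1; 0; 0; 0; 0; 0; 0; 0; 0; 0]; [:: 1; 1; -1; 0; 0; 0; 0; 0; 0; 0];
      [:: -1; 0; 1; 0; -1; 0; 0; 0; 0; 0]; [:: 0; -1; 1; 1; 0; -1; 0; 0; 0; 0];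
      [:: 0; 0; 0; 0; 1; 0; 0; 0; 0; 0]; [:: 0; 0; -1; 0; 1; 1; -1; 0; 0; 0];
      [:: 0; 0; 0; 0; -1; 0; 1; 0; -1; 0]; [:: 0; 0; 0; 0; 0; -1; 1; 1; 0; -1];
      [:: 0; 0; 0; 0; 0; 0; 0; 0; 1; 0]; [:: 0; 0; 0; 0; 0; 0; -1; 0; 1; 1]].

Definition Einv_rows : seq (seq int) :=
  [:: [:: 1; 0; 0; 0; 0; 0; 0; 0; 0; 0]; [:: 0; 1; 1; 0; 1; 0; 0; 0; 0; 0];
      [:: 1; 0; 1; 0; 1; 0; 0; 0; 0; 0]; [:: 0; 1; 1; 1; 1; 1; 1; 0; 1; 0];
      [:: 0; 0; 0; 0; 1; 0; 0; 0; 0; 0]; [:: 1; 0; 1; 0; 1; 1; 1; 0; 1; 0];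
      [:: 0; 0; 0; 0; 1; 0; 1; 0; 1; 0]; [:: 1; 0; 1; 0; 1; 1; 1; 1; 0; 1];
      [:: 0; 0; 0; 0; 0; 0; 0; 0; 1; 0]; [:: 0; 0; 0; 0; 1; 0; 1; 0; 0; 1]].

Lemma Emx_rows : Emx = mx_of_rows E_rows.
Proof.
apply: mx10P => r c lt_r lt_c; rewrite !mxE !inordK // ringelE !at_delta //.
by move: c lt_c; move: r lt_r; do 2 apply: ord10_ind.
Qed.

Lemma Emx_unit : Emx \in unitmx.
Proof.
suff /mulmx1_unit[] : mx_of_rows Einv_rows *m Emx = 1%:M by [].
apply: mx10P => r c lt_r lt_c; rewrite Emx_rows mul_mx_of_rows //.
rewrite (big_ord10 (fun k => nth 0 (nth [::] Einv_rows r) k * nth 0 (nth [::] E_rows k) c)).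
rewrite mxE -(inj_eq val_inj) /= !inordK //.
by move: c lt_c; move: r lt_r; do 2 apply: ord10_ind.
Qed.

Lemma Phi_fixedP h : reflect (forall x, ringel x h = - ringel h x) (Phi *m h == h).
Proof.
apply: (equivP (coxeter_fixedP Emx_unit h)).
by split=> skew x; have := skew x; rewrite !ringel_gramE.
Qed.

Section PhiFixed.

Variable h : vec.
Hypothesis Phi_h : Phi *m h = h.

Lemma ringel_PhiX_l m x : ringel (Phi ^+ m *m x) h = ringel x h.
Proof. by rewrite !ringel_gramE; exact: form_coxeterX_l Emx_unit h Phi_h m x. Qed.

Lemma ringel_PhiX_r m x : ringel h (Phi ^+ m *m x) = ringel h x.
Proof. by rewrite !ringel_gramE; exact: form_coxeterX_r Emx_unit h Phi_h m x. Qed.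

End PhiFixed.

Lemma Phi_h0 : Phi *m h0 = h0.
Proof. by apply/eqP/Phi_fixedP => x; rewrite /h0; expand_coords; ring. Qed.

Lemma Phi_hinf : Phi *m hinf = hinf.
Proof. by apply/eqP/Phi_fixedP => x; rewrite /hinf; expand_coords; ring. Qed.

Definition hcomb (s t : int) : vec := s *: h0 + t *: hinf.

Lemma at_hcomb0 s t : at_v (hcomb s t) 0 = s.
Proof. by rewrite /hcomb /h0 /hinf; expand_coords; ring. Qed.

Lemma at_hcomb3 s t : at_v (hcomb s t) 3 = t.
Proof. by rewrite /hcomb /h0 /hinf; expand_coords; ring. Qed.

Lemma eq_hcomb s t s' t' : (hcomb s t == hcomb s' t') = (s == s') && (t == t').
Proof.
apply/eqP/andP => [e | [/eqP-> /eqP->] //].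
by move: (at_hcomb0 s t) (at_hcomb3 s t); rewrite e at_hcomb0 at_hcomb3 => -> ->.
Qed.

Lemma hcomb00 : hcomb 0 0 = 0.
Proof. by rewrite /hcomb !scale0r addr0. Qed.

Lemma hcombD s t s' t' : hcomb s t + hcomb s' t' = hcomb (s + s') (t + t').
Proof. by rewrite /hcomb !scalerDl addrACA. Qed.

Lemma hcomb_mulrn s t m : hcomb s t *+ m = hcomb (s *+ m) (t *+ m).
Proof. by rewrite /hcomb mulrnDl !scalerMnl. Qed.

Lemma Phi_hcomb s t : Phi *m hcomb s t = hcomb s t.
Proof. by rewrite /hcomb mulmxDr -!scalemxAr Phi_h0 Phi_hinf. Qed.

Lemma ringel_hcomb_hinf s t : ringel (hcomb s t) hinf = 6 * s.
Proof. by rewrite /hcomb /h0 /hinf; expand_coords; ring. Qed.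

Lemma ringel_h0_hcomb s t : ringel h0 (hcomb s t) = 6 * t.
Proof. by rewrite /hcomb /h0 /hinf; expand_coords; ring. Qed.

Lemma qform_addhcomb x s t : qform (x + hcomb s t) = qform x.
Proof. by rewrite /qform /hcomb /h0 /hinf; expand_coords; ring. Qed.

Lemma Phi_fixed_hcomb x : Phi *m x = x -> x = hcomb (at_v x 0) (at_v x 3).
Proof.
move/eqP/Phi_fixedP => skew.
have eq k : (k < 10)%N ->
    ringel (delta_mx (inord k) 0) x + ringel x (delta_mx (inord k) 0) = 0.
  by move=> _; rewrite skew addNr.
have e0 := eq 0%N isT; have e1 := eq 1%N isT; have e2 := eq 2%N isT;
have e3 := eq 3%N isT; have e4 := eq 4%N isT; have e5 := eq 5%N isT;
have e6 := eq 6%N isT; have e7 := eq 7%N isT; have e8 := eq 8%N isT;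
have e9 := eq 9%N isT.
let expand H := rewrite !ringelE !at_delta //= in H in
  expand e0; expand e1; expand e2; expand e3; expand e4;
  expand e5; expand e6; expand e7; expand e8; expand e9.
by apply: vecP; apply: ord10_ind; rewrite /hcomb /h0 /hinf; expand_coords; lia.
Qed.

Lemma hvec_fixed d i : hasRank d i -> Phi *m hvec d i = hvec d i.
Proof. by case/and3P=> _ /eqP Phi_id _; exact: mulmx_orbit_sum. Qed.

Lemma hvec_hcomb d i :
  hasRank d i -> hvec d i = hcomb (at_v (hvec d i) 0) (at_v (hvec d i) 3).
Proof. by move/hvec_fixed/Phi_fixed_hcomb. Qed.

Lemma hvec_addhcomb d s t i : hvec (d + hcomb s t) i = hvec d i + hcomb s t *+ i.
Proof.
rewrite /hvec (eq_bigr (fun j => Phi ^+ j *m d + hcomb s t)) => [|j _]; last first.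
  exact/mulmxX_addfixed/Phi_hcomb.
by rewrite big_split /= sumr_const_nat subn1.
Qed.

Lemma hasRank_addhcomb d s t i : hasRank (d + hcomb s t) i = hasRank d i.
Proof.
have shift m : (Phi ^+ m *m (d + hcomb s t) == d + hcomb s t) = (Phi ^+ m *m d == d).
  by rewrite mulmxX_addfixed ?Phi_hcomb // (inj_eq (addIr _)).
by rewrite /hasRank shift; congr [&& _, _ & _]; apply: eq_forallb => m; rewrite shift.
Qed.

Lemma ringel_hvec_hinf d i : ringel (hvec d i) hinf = ringel d hinf *+ i.
Proof.
rewrite /hvec (big_morph _ (ringelDl hinf) (ringel0l hinf)).
rewrite (eq_bigr (fun _ => ringel d hinf)) => [|j _]; last exact/ringel_PhiX_l/Phi_hinf.
by rewrite sumr_const_nat subn1.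
Qed.

Lemma ringel_h0_hvec d i : ringel h0 (hvec d i) = ringel h0 d *+ i.
Proof.
rewrite /hvec (big_morph _ (ringelDr h0) (ringel0r h0)).
rewrite (eq_bigr (fun _ => ringel h0 d)) => [|j _]; last exact/ringel_PhiX_r/Phi_h0.
by rewrite sumr_const_nat subn1.
Qed.

Lemma ql_hcomb d i s t : hvec d i = hcomb s t -> ql d i = gcdn `|s| `|t|.
Proof.
rewrite /ql => ->; apply/eqP; rewrite eqn_dvd dvdn_gcd -andbA; apply/and3P; split.
- apply: (biggcdn_inf (inord 0)) => //.
  by rewrite -[hcomb s t _ _]/(at_v (hcomb s t) 0) at_hcomb0.
- apply: (biggcdn_inf (inord 3)) => //.
  by rewrite -[hcomb s t _ _]/(at_v (hcomb s t) 3) at_hcomb3.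
have comb (u v : int) : (gcdn `|s| `|t| %| `|(s * u + t * v)%R|)%N.
  have : (Posz (gcdn `|s|%N `|t|%N) %| s * u + t * v)%Z.
    by apply: rpredD; apply: dvdz_mulr; [exact: dvdn_gcdl | exact: dvdn_gcdr].
  by [].
by apply/dvdn_biggcdP => j _; rewrite /hcomb !mxE comb.
Qed.

Definition Rh (i : nat) (a b : int) (d : vec) : bool :=
  [&& isRoot d, hasRank d i & hvec d i == hcomb a b].

Lemma RliE lam l i a b d : (0 < i)%N -> (0 < l)%N -> gcdn a `|b| = l ->
  slope_repr lam l a b -> Rli lam l i d = Rh i a b d.
Proof.
move=> i_gt0 l_gt0 gab lam_ab; rewrite /Rli /Rlam /Rh.
have [rk|] := boolP (hasRank d i); last by rewrite !andbF.
have hv := hvec_hcomb rk; set s := at_v _ 0 in hv; set t := at_v _ 3 in hv.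
have eq_y : i%:Z * ringel d hinf = 6 * s.
  by rewrite -(ringel_hcomb_hinf s t) -hv ringel_hvec_hinf -natz mulr_natl.
have eq_x : i%:Z * ringel h0 d = 6 * t.
  by rewrite -(ringel_h0_hcomb s t) -hv ringel_h0_hvec -natz mulr_natl.
have i_pos : 0 < i%:Z by rewrite ltz_nat.
have := pos_slope_gcdE s t l_gt0 gab lam_ab.
rewrite -(pos_pair_scale i_pos _ eq_y eq_x) // -(slope_pair_scale i_pos _ eq_y eq_x) //.
by rewrite -(ql_hcomb hv) hv eq_hcomb => <-; rewrite /= -!andbA.
Qed.

Lemma RmnE m n i r : (0 < i)%N -> (0 < gcdn m n)%N -> Rmn m n i r = Rh i m n r.
Proof.
move=> i_gt0 g_gt0; apply: RliE => //.
by rewrite /slope_repr; case: posnP => [->|m_gt0]; rewrite ?gcd0n.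
Qed.

Lemma hvec0 i : hvec 0 i = 0.
Proof. by rewrite /hvec big1 // => j _; rewrite mulmx0. Qed.

Lemma hvec_hcomb_neq0 d i a b :
  hvec d i = hcomb a b -> (a != 0) || (b != 0) -> d != 0.
Proof.
move=> hv; apply: contraTneq => d0.
by rewrite negb_or !negbK -eq_hcomb hcomb00 -hv d0 hvec0.
Qed.

Lemma Rh_addhcomb i a b s t d :
  (a != 0) || (b != 0) -> (a + s *+ i != 0) || (b + t *+ i != 0) ->
  Rh i (a + s *+ i) (b + t *+ i) (d + hcomb s t) = Rh i a b d.
Proof.
move=> ab0 abst0; rewrite /Rh hasRank_addhcomb hvec_addhcomb hcomb_mulrn.
rewrite -hcombD (inj_eq (addIr _)).
have [hv|] := eqVneq (hvec d i) (hcomb a b); last by rewrite !andbF.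
rewrite /isRoot qform_addhcomb (hvec_hcomb_neq0 hv ab0).
rewrite (@hvec_hcomb_neq0 _ i (a + s *+ i) (b + t *+ i)) //.
by rewrite hvec_addhcomb hv hcomb_mulrn hcombD.
Qed.

Theorem mainTheorem16 (lam : option rat) (i l : nat) (a : nat) (b : int) :
  i \in [:: 2%N; 3%N; 6%N] -> (0 < l)%N -> ~~ (i %| l)%N ->
  gcdn a `|b|%N = l ->
  match lam with
  | None => a = 0%N /\ b = l%:Z
  | Some x => (0 < a)%N /\ x = b%:~R / a%:R
  end ->
  forall d : vec,
    Rli lam l i d <->
    exists r : vec,
      Rmn (a %% i)%N `|(b %% i)%Z|%N i r /\
      d = (a %/ i)%N%:Z *: h0 + (b %/ i)%Z *: hinf + r.
Proof.
move=> i236 l_gt0 i_ndvd_l gab lam_ab d.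
have i_gt0 : (0 < i)%N by move: i236; rewrite !inE => /or3P[] /eqP->.
have ea : a%:Z = (a %% i)%N%:Z + (a %/ i)%N%:Z *+ i.
  by rewrite -mulr_natr -natz; have := divn_eq a i; lia.
have eb : b = `|(b %% i)%Z|%N%:Z + (b %/ i)%Z *+ i.
  have : 0 <= (b %% i)%Z by apply: modz_ge0; lia.
  by rewrite -mulr_natr -natz; have := divz_eq b i; lia.
have ab2_neq0 : ((a %% i)%N%:Z != 0) || (`|(b %% i)%Z|%N%:Z != 0).
  apply: contraNT i_ndvd_l; rewrite negb_or !negbK -gab dvdn_gcd => /andP[a0 b0].
  have i_dvd_b : (i%:Z %| b)%Z by apply/dvdz_mod0P; lia.
  by apply/andP; split; [rewrite /dvdn; lia | exact: i_dvd_b].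
have shiftE r :
    Rh i a b (r + hcomb (a %/ i)%N (b %/ i)%Z) = Rh i (a %% i)%N `|(b %% i)%Z|%N r.
  rewrite {1}ea {1}eb Rh_addhcomb // -ea -eb.
  by move: l_gt0; rewrite -gab gcdn_gt0; lia.
have g2_gt0 : (0 < gcdn (a %% i) `|(b %% i)%Z|)%N by rewrite gcdn_gt0; lia.
rewrite (RliE d i_gt0 l_gt0 gab lam_ab) -/(hcomb _ _); split => [Rd | [r [Rr ->]]].
  exists (d - hcomb (a %/ i)%N (b %/ i)%Z); rewrite RmnE // -shiftE subrK.
  by split=> //; rewrite addrC subrK.
by rewrite addrC shiftE -RmnE.
Qed.
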